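(* Let $A$ be a $d$-dimensional double permutation of order $n$, and suppose there is an integer $k$ with $2\le k\le d-1$ such that the support of every $k$-dimensional plane of $A$ and the support of every $(k+1)$-dimensional plane of $A$ is a connected bitrade. Then the support of $A$ is a connected bitrade.
   Context: A $d$-dimensional matrix of order $n$ is an array $A=(a_\alpha)_{\alpha\in I_n^d}$, $I_n^d=\{0,\dots,n-1\}^d$. A $k$-dimensional plane is obtained by fixing the values of $d-k$ coordinate positions and letting the other $k$ coordinates vary over $\{0,\dots,n-1\}$; a line is a $1$-dimensional plane. A double permutation is a polystochastic matrix (nonnegative, each line sums to $1$) all of whose entries lie in $\{0,1/2\}$. The support of a matrix (or plane) is the set of indices with nonzero entries; the support of a $k$-dimensional plane is regarded as a subset of a $k$-dimensional index set. A set $U$ of indices is a unitrade if every line contains either $0$ or $2$ elements of $U$. Consider the graph on $U$ in which two elements are adjacent iff they lie on a common line; $U$ is a bitrade if this graph is bipartite (equivalently there is $\sigma:U\to\{\pm1\}$ with $\sigma(\alpha)\ne\sigma(\beta)$ whenever $\alpha,\beta\in U$ lie on a common line), and $U$ is connected if this graph is connected. *)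

From HB Require Import structures.
From mathcomp Require Import all_boot all_order all_algebra.
Set Implicit Arguments. Unset Strict Implicit. Unset Printing Implicit Defensive.
Import Order.TTheory GRing.Theory Num.Theory.

Definition mindex (d n : nat) := {ffun 'I_d -> 'I_n}.

Section Defs.
Variables (d n : nat).

Definition line (i : 'I_d) (a : mindex d n) : {set mindex d n} :=
  [set b : mindex d n | [forall j, (j != i) ==> (b j == a j)]].

Definition unitrade (U : {set mindex d n}) : Prop :=
  forall (i : 'I_d) (a : mindex d n),
    #|line i a :&: U| = 0%N \/ #|line i a :&: U| = 2%N.

Definition adj (U : {set mindex d n}) : rel (mindex d n) :=
  fun a b => [&& a \in U, b \in U, a != b & [exists i, b \in line i a]].

(* U is a bitrade: a unitrade whose adjacency graph is bipartite
   (sigma : U -> {+1,-1} encoded by bool) *)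
Definition bitrade (U : {set mindex d n}) : Prop :=
  unitrade U /\
  exists sigma : mindex d n -> bool,
    forall a b, adj U a b -> sigma a != sigma b.

Definition connectedU (U : {set mindex d n}) : Prop :=
  {in U &, forall a b, connect (adj U) a b}.

Definition connected_bitrade (U : {set mindex d n}) : Prop :=
  bitrade U /\ connectedU U.

End Defs.

Local Open Scope ring_scope.

Definition supp (R : numDomainType) (d n : nat) (A : {ffun mindex d n -> R})
  : {set mindex d n} := [set a | A a != 0].

Definition double_permutation (R : numFieldType) (d n : nat)
  (A : {ffun mindex d n -> R}) : Prop :=
  (forall a, A a = 0 \/ A a = 2^-1) /\
  (forall (i : 'I_d) (a : mindex d n), \sum_(b in line i a) A b = 1).

(* k-dimensional plane: free coordinates f 0, ..., f (k-1) (f injective),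
   remaining coordinates fixed to those of alpha; plane_idx maps the
   k-dimensional mindex beta to the corresponding d-dimensional mindex. *)
Definition plane_idx (d n k : nat) (f : 'I_k -> 'I_d) (alpha : mindex d n)
  (beta : mindex k n) : mindex d n :=
  [ffun j => if [pick i | f i == j] is Some i then beta i else alpha j].

Definition plane (R : numDomainType) (d n k : nat) (A : {ffun mindex d n -> R})
  (f : 'I_k -> 'I_d) (alpha : mindex d n) : {ffun mindex k n -> R} :=
  [ffun beta => A (plane_idx f alpha beta)].

From HB Require Import structures.
From mathcomp Require Import all_boot all_order all_algebra.
From mathcomp Require Import lra zify.
Import Order.TTheory GRing.Theory Num.Theory.
Set Implicit Arguments. Unset Strict Implicit. Unset Printing Implicit Defensive.

(* Call a set S of coordinates good if, in every plane with free coordinates S,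
   the support is connected and properly 2-colourable.  Sets of size k and k+1
   are good by hypothesis; we show by induction that every larger set is good,
   and the full set of coordinates gives the theorem.
   Let S = S' + {j} with S' good.  An S-plane is the union of its S'-layers,
   each connected and coloured.  Fix a (k+1)-plane T with free coordinates
   {j} + B0, B0 in S', and flip the colouring of each layer so that it agrees
   with a colouring of T at one support point of the layer.  Colourings of a
   connected set are unique up to a global flip and every k-plane is connected,
   so the glued colouring is proper on T, and it stays proper when T is moved
   through a shared k-plane, either exchanging one free direction other than j
   or shifting one fixed coordinate.  Such moves reach every edge in direction
   j.  Connectedness is easier: two points are joined through a (k+1)-plane and
   a layer. *)

Lemma exists_subset_card (T : finType) (A : {set T}) m :
  m <= #|A| -> exists2 B : {set T}, B \subset A & #|B| = m.
Proof.
elim: m => [|m IHm] leA; first by exists set0; rewrite ?sub0set ?cards0.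
have [B sBA cardB] := IHm (ltnW leA).
have /properP[_ [a aA aB]] : B \proper A by rewrite properEcard sBA cardB.
by exists (a |: B); rewrite ?subUset ?sub1set ?aA // cardsU1 aB cardB.
Qed.

Lemma homo_connect (T T' : finType) (e : rel T) (e' : rel T') (h : T -> T') x y :
  {homo h : a b / e a b >-> e' a b} -> connect e x y -> connect e' (h x) (h y).
Proof.
move=> hom /connectP[s es ->]; apply/connectP; exists (map h s).
  exact: homo_path es.
by rewrite last_map.
Qed.

Lemma connect_invariant (T : finType) (T' : Type) (e : rel T) (f : T -> T') x y :
  (forall a b, e a b -> f a = f b) -> connect e x y -> f x = f y.
Proof.
move=> inv /connectP[s]; elim: s x => [|z s IHs] x /=; first by move=> _ ->.
by case/andP=> exz /IHs{}IHs /IHs <-; apply: inv.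
Qed.

Section Planes.
Variables (d n : nat).
Notation M := (mindex d n).
Implicit Types (S B C D : {set 'I_d}) (P : {set M}) (p q x y a b : M).

Definition subplane S p : {set M} :=
  [set y : M | [forall i, (i \notin S) ==> (y i == p i)]].

Definition move_coord p (j : 'I_d) (v : 'I_n) : M :=
  [ffun i => if i == j then v else p i].

Lemma subplaneP S p y :
  reflect (forall i, i \notin S -> y i = p i) (y \in subplane S p).
Proof.
rewrite inE; apply: (iffP forallP) => [yp i iS | yp i].
  by have /implyP/(_ iS)/eqP := yp i.
by apply/implyP=> iS; rewrite yp.
Qed.

Lemma lineP i a b : reflect (forall j, j != i -> b j = a j) (b \in line i a).
Proof.
rewrite inE; apply: (iffP forallP) => [ba j ji | ba j].
  by have /implyP/(_ ji)/eqP := ba j.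
by apply/implyP=> ji; rewrite ba.
Qed.

Lemma subplane_refl S p : p \in subplane S p.
Proof. by apply/subplaneP. Qed.

Lemma subplane_sub B C q p :
  B \subset C -> q \in subplane C p -> subplane B q \subset subplane C p.
Proof.
move=> sBC /subplaneP qp; apply/subsetP=> y /subplaneP yq; apply/subplaneP=> i iC.
by rewrite yq ?qp //; apply: contra iC; apply: (subsetP sBC).
Qed.

Lemma line_sub_subplane i S p : i \in S -> line i p \subset subplane S p.
Proof.
move=> iS; apply/subsetP=> y /lineP yp; apply/subplaneP=> j jS.
by apply: yp; apply: contraNneq jS => ->.
Qed.

Lemma line_subplane_eq i S p a b :
  i \notin S -> a \in subplane S p -> b \in subplane S p -> b \in line i a -> b = a.
Proof.
move=> iS /subplaneP ap /subplaneP bp /lineP ba; apply/ffunP=> j.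
by have [->|/ba//] := eqVneq j i; rewrite ap ?bp.
Qed.

Lemma subplane_layer j B p a b :
  a \in subplane (j |: B) p -> b \in subplane (j |: B) p -> a j = b j ->
  b \in subplane B a.
Proof.
move=> /subplaneP ap /subplaneP bp abj; apply/subplaneP=> i iB.
have [->//|ij] := eqVneq i j.
have iD : i \notin j |: B by rewrite !inE negb_or ij.
by rewrite ap ?bp.
Qed.

Lemma move_coord_eq p j v : move_coord p j v j = v.
Proof. by rewrite ffunE eqxx. Qed.

Lemma line_move_coord_eq i j p v r :
  i != j -> r \in line i (move_coord p j v) -> r j = v.
Proof. by move=> ij /lineP->; rewrite ?move_coord_eq // eq_sym. Qed.

Lemma line_move_coord_sub i j D p v r :
  i \in D -> j \in D -> r \in line i (move_coord p j v) -> r \in subplane D p.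
Proof.
move=> iD jD /lineP rp; apply/subplaneP=> l lD.
rewrite rp ?ffunE; last by apply: contraNneq lD => ->.
by case: eqP => // lj; rewrite lj jD in lD.
Qed.

Lemma move_coord_line p j v : move_coord p j v \in line j p.
Proof. by apply/lineP=> i ij; rewrite ffunE (negbTE ij). Qed.

Lemma line_move_coord p j v : p \in line j (move_coord p j v).
Proof. by apply/lineP=> i ij; rewrite ffunE (negbTE ij). Qed.

Lemma notin_subD1 S C j : C \subset S :\ j -> j \notin C.
Proof. by move=> sC; apply/negP => /(subsetP sC); rewrite !inE eqxx. Qed.

Lemma setU1_subD1 S C j : j \in S -> C \subset S :\ j -> j |: C \subset S.
Proof. by move=> jS sC; rewrite subUset sub1set jS (subset_trans sC) ?subD1set. Qed.

Lemma subplane_sub_layer S j x y B :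
  y \in subplane S x -> B \subset S :\ j ->
  subplane B y \subset subplane (S :\ j) (move_coord x j (y j)).
Proof.
move=> /subplaneP yx sB; apply: subplane_sub sB _; apply/subplaneP=> i iS.
rewrite ffunE; have [->//|ij] := eqVneq i j.
by rewrite yx //; move: iS; rewrite !inE ij.
Qed.

Variable U : {set M}.

Definition adj_in P : rel M := fun a b => [&& adj U a b, a \in P & b \in P].

Definition colouring_on P (s : M -> bool) :=
  forall a b, a \in P -> b \in P -> adj U a b -> s a != s b.

Definition connected_in P :=
  {in U :&: P &, forall a b, connect (adj_in P) a b}.

Definition good_planes S :=
  forall p, (exists s, colouring_on (subplane S p) s) /\ connected_in (subplane S p).

Lemma colouring_onS P P' s : P' \subset P -> colouring_on P s -> colouring_on P' s.
Proof. by move=> sP col a b aP bP; apply: col; apply: (subsetP sP). Qed.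

Lemma connect_adj_inS P P' a b :
  P' \subset P -> connect (adj_in P') a b -> connect (adj_in P) a b.
Proof.
move=> sP; apply: connect_sub => {}a {}b /and3P[ab aP bP]; apply: connect1.
by rewrite /adj_in ab !(subsetP sP).
Qed.

Lemma colouring_on_unique P s1 s2 a b :
  connected_in P -> colouring_on P s1 -> colouring_on P s2 ->
  a \in U :&: P -> b \in U :&: P -> (s1 a == s2 a) = (s1 b == s2 b).
Proof.
move=> conP col1 col2 aUP bUP.
apply: (connect_invariant (f := fun y => s1 y == s2 y) _ (conP a b aUP bUP)).
move=> u w /and3P[uw uP wP].
move: (col1 u w uP wP uw) (col2 u w uP wP uw).
by case: (s1 u) (s1 w) (s2 u) (s2 w) => [] [] [] [].
Qed.

Lemma colouring_on_twin P s s' c :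
  {in U :&: P, forall y, (s y == s' y) = c} -> colouring_on P s' -> colouring_on P s.
Proof.
move=> twin col' a b aP bP ab; have /and4P[aU bU _ _] := ab.
have aUP : a \in U :&: P by rewrite inE aU aP.
have bUP : b \in U :&: P by rewrite inE bU bP.
move: (col' a b aP bP ab) (twin a aUP) (twin b bUP) => {twin}.
by case: (s a) (s b) (s' a) (s' b) c => [] [] [] [] [].
Qed.

Lemma connected_bitrade_of_good_planes :
  (forall i a, #|line i a :&: U| = 2) -> good_planes setT -> connected_bitrade U.
Proof.
move=> line2 goodT; have inT a b : b \in subplane setT a by apply/subplaneP=> i; rewrite inE.
split; first split.
- by move=> i a; right.
- have [a _|noM] := pickP (@predT M); last by exists (fun=> true) => a; have := noM a.
  by have [[s col] _] := goodT a; exists s => b c; apply: col.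
- move=> a b aU bU; have [_ con] := goodT a.
  have := con a b; rewrite !in_setI aU bU !inT => /(_ isT isT).
  by apply: connect_sub => u w /and3P[uw _ _]; apply: connect1.
Qed.

Hypothesis line_meets : forall i a, exists2 q, q \in U & q \in line i a.

Lemma connected_in_glue S B j s0 :
  B \subset S -> j \in B -> s0 \in B -> s0 != j ->
  (forall p, connected_in (subplane B p)) ->
  (forall p, connected_in (subplane (S :\ j) p)) ->
  forall x, connected_in (subplane S x).
Proof.
move=> sBS jB s0B s0j conB conS' x a b /setIP[aU ax] /setIP[bU bx].
have [r rU rl] := line_meets s0 (move_coord a j (b j)).
have ra : r \in subplane B a by apply: line_move_coord_sub rl.
have sBax : subplane B a \subset subplane S x by apply: subplane_sub sBS ax.
have Sj : j |: (S :\ j) = S by rewrite setD1K ?(subsetP sBS j jB).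
have rb : r \in subplane (S :\ j) b.
  apply: (subplane_layer (j := j) (p := x)); rewrite ?Sj //.
  - exact: subsetP sBax r ra.
  - by rewrite (line_move_coord_eq s0j rl).
have aUa : a \in U :&: subplane B a by rewrite inE aU subplane_refl.
have rUa : r \in U :&: subplane B a by rewrite inE rU ra.
have rUb : r \in U :&: subplane (S :\ j) b by rewrite inE rU rb.
have bUb : b \in U :&: subplane (S :\ j) b by rewrite inE bU subplane_refl.
apply: connect_trans (connect_adj_inS sBax (conB a a r aUa rUa)) _.
exact: connect_adj_inS (subplane_sub (subD1set S j) bx) (conS' b r b rUb bUb).
Qed.

Section Induction.
Variable k : nat.
Hypothesis k_gt1 : 1 < k.
Hypothesis good_k : forall C, #|C| = k -> good_planes C.
Hypothesis good_k1 : forall C, #|C| = k.+1 -> good_planes C.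

Section Glue.
Variables (S B0 : {set 'I_d}) (j : 'I_d) (x : M).
Hypothesis jS : j \in S.
Hypothesis sB0 : B0 \subset S :\ j.
Hypothesis card_B0 : #|B0| = k.
Variable sig : 'I_n -> M -> bool.
Hypothesis sig_layer :
  forall v, colouring_on (subplane (S :\ j) (move_coord x j v)) (sig v).
Variable sT : M -> bool.
Hypothesis sT_base : colouring_on (subplane (j |: B0) x) sT.
Variable rep : 'I_n -> M.
Hypothesis rep_base :
  forall v, rep v \in U :&: subplane (j |: B0) x /\ rep v j = v.

(* [rep v] is a support point of the base plane in layer [v], where the layer
   colouring [sig v] is compared with [sT]. *)
Definition layer_flip v := sig v (rep v) != sT (rep v).

Definition glued y := sig (y j) y (+) layer_flip (y j).

Lemma glued_on_layer y B :
  y \in subplane S x -> B \subset S :\ j -> colouring_on (subplane B y) glued.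
Proof.
move=> yx sB a b aB bB ab.
have sBL := subplane_sub_layer yx sB.
have aL := subsetP sBL a aB; have bL := subsetP sBL b bB.
have layer_j c : c \in subplane (S :\ j) (move_coord x j (y j)) -> c j = y j.
  by move/subplaneP->; rewrite ?move_coord_eq // !inE eqxx.
rewrite /glued !layer_j //; move: (sig_layer aL bL ab).
by case: (sig _ a) (sig _ b) (layer_flip _) => [] [] [].
Qed.

Lemma glued_rep p B s c :
  p \in subplane S x -> B \subset S :\ j -> #|B| = k ->
  colouring_on (subplane (j |: B) p) s ->
  (forall v, exists r, [/\ r \in U, r \in subplane (j |: B) p, r j = v
                         & (glued r == s r) = c]) ->
  colouring_on (subplane (j |: B) p) glued.
Proof.
move=> px sB cardB cols reps; apply: (colouring_on_twin (c := c) _ cols) => y /setIP[yU yT].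
have [r [rU rT rj <-]] := reps (y j).
have ry : r \in subplane B y by apply: subplane_layer yT rT _; rewrite rj.
have sByT : subplane B y \subset subplane (j |: B) p by apply: subplane_sub yT; apply: subsetUr.
have yx : y \in subplane S x.
  by apply: subsetP yT; apply: subplane_sub px; apply: setU1_subD1.
apply: (colouring_on_unique (good_k cardB y).2).
- exact: glued_on_layer yx sB.
- exact: colouring_onS sByT cols.
- by rewrite inE yU subplane_refl.
- by rewrite inE rU ry.
Qed.

Lemma glued_on_base : colouring_on (subplane (j |: B0) x) glued.
Proof.
apply: (glued_rep (c := true) (subplane_refl _ _) sB0 card_B0 sT_base) => v.
have [/setIP[rU rT] rv] := rep_base v.
exists (rep v); split=> //; rewrite /glued /layer_flip rv.
by case: (sig v _) (sT _) => [] [].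
Qed.

Lemma glued_extend p B C c :
  p \in subplane S x -> C \subset B -> B \subset S :\ j -> #|B| = k ->
  #|j |: C| = k -> c \in C ->
  colouring_on (subplane (j |: C) p) glued -> colouring_on (subplane (j |: B) p) glued.
Proof.
move=> px sCB sB cardB cardC cC colR.
have cardjB : #|j |: B| = k.+1 by rewrite cardsU1 (notin_subD1 sB) cardB.
have [s2 col2] := (good_k1 cardjB p).1.
have sRT : subplane (j |: C) p \subset subplane (j |: B) p.
  by apply: subplane_sub (subplane_refl _ _); apply: setUS.
have cjC : c \in j |: C by rewrite !inE cC orbT.
have cj : c != j by apply: contraTneq cC => ->; apply: notin_subD1 (subset_trans sCB sB).
have [r0 r0U r0l] := line_meets c p.
have r0R : r0 \in subplane (j |: C) p by apply: subsetP r0l; apply: line_sub_subplane.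
apply: (glued_rep (c := glued r0 == s2 r0) px sB cardB col2) => v.
have [r rU rl] := line_meets c (move_coord p j v).
have rR : r \in subplane (j |: C) p by apply: line_move_coord_sub rl; rewrite ?setU11.
exists r; split; rewrite ?(subsetP sRT) ?(line_move_coord_eq cj rl) //.
apply: (colouring_on_unique (good_k cardC p).2 colR (colouring_onS sRT col2)).
  by rewrite inE rU.
by rewrite inE r0U.
Qed.

(* If [c] is not already free, pass from [p0] to [p] through the (k+1)-plane
   obtained by exchanging one direction of [B0] for [c]. *)
Lemma glued_shift p0 p c :
  p0 \in subplane S x -> p \in subplane S x -> c \in S -> p \in line c p0 ->
  colouring_on (subplane (j |: B0) p0) glued -> colouring_on (subplane (j |: B0) p) glued.
Proof.
move=> p0x px cS pp0 col0.
have pD D : c \in D -> p \in subplane D p0 by move/line_sub_subplane/subsetP; apply.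
have [cB|cB] := boolP (c \in j |: B0).
  by apply: colouring_onS col0; apply: subplane_sub (pD _ cB).
have [s0 s0B0] : exists s0, s0 \in B0 by apply/card_gt0P; rewrite card_B0 ltnW.
move: cB; rewrite !inE negb_or => /andP[cj cB0].
have cS' : c \in S :\ j by rewrite !inE cj.
pose C := B0 :\ s0.
have sCB0 : C \subset B0 := subD1set B0 s0.
have cardC : #|C| = k.-1 by rewrite -card_B0 (cardsD1 s0 B0) s0B0.
have cardjC : #|j |: C| = k.
  by rewrite cardsU1 cardC (notin_subD1 (subset_trans sCB0 sB0)); lia.
have cardB1 : #|c |: C| = k.
  by rewrite cardsU1 cardC (contraNN (subsetP sCB0 c) cB0); lia.
have [c' c'C] : exists c', c' \in C by apply/card_gt0P; rewrite cardC; lia.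
have sB1 : c |: C \subset S :\ j by rewrite subUset sub1set cS' (subset_trans sCB0 sB0).
have colC0 : colouring_on (subplane (j |: C) p0) glued.
  by apply: colouring_onS col0; apply: subplane_sub (subplane_refl _ _); apply: setUS.
have col1 := glued_extend p0x (subsetUr _ _) sB1 cardB1 cardjC c'C colC0.
have colC : colouring_on (subplane (j |: C) p) glued.
  apply: colouring_onS col1; apply: subplane_sub (pD _ _); first exact/setUS/subsetUr.
  by rewrite !inE eqxx orbT.
exact: glued_extend px sCB0 sB0 card_B0 cardjC c'C colC.
Qed.

Lemma glued_on_slabs p :
  p \in subplane S x -> colouring_on (subplane (j |: B0) p) glued.
Proof.
have [m] := ubnP #|[set i | p i != x i]|; elim: m p => // m IHm p.
rewrite ltnS => lem px; have [->|pNx] := eqVneq p x; first exact: glued_on_base.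
have [c pcx] : exists c, p c != x c.
  apply/existsP; apply: contraNT pNx => /existsPn pc.
  by apply/eqP/ffunP=> i; apply/eqP/negbNE/pc.
pose p0 := move_coord p c (x c).
have cS : c \in S by apply: contraNT pcx => cS; move/subplaneP: px => ->.
have p0x : p0 \in subplane S x.
  apply: subsetP (subplane_sub (subxx S) px) _ _.
  exact: subsetP (line_sub_subplane p cS) _ (move_coord_line p c (x c)).
have fewer : #|[set i | p0 i != x i]| < m.
  apply: leq_trans lem; apply: proper_card; apply/properP; split.
    by apply/subsetP=> i; rewrite !inE ffunE; case: (eqVneq i c) => [->|]; rewrite ?eqxx.
  by exists c; rewrite !inE /p0 ?move_coord_eq ?eqxx.
exact: glued_shift p0x px cS (line_move_coord p c (x c)) (IHm p0 fewer p0x).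
Qed.

Lemma glued_colouring : colouring_on (subplane S x) glued.
Proof.
move=> a b ax bx ab; have [abj|abj] := eqVneq (a j) (b j).
  have Sj : j |: (S :\ j) = S by rewrite setD1K.
  apply: (glued_on_layer ax (subxx _) (subplane_refl _ _) _ ab).
  by apply: (subplane_layer (j := j) (p := x)); rewrite ?Sj.
have /and4P[_ _ _ /existsP[i ba]] := ab.
have ij : i = j.
  by apply/eqP; apply: contraNT abj => ij; move/lineP: ba => ->; rewrite // eq_sym.
apply: (glued_on_slabs ax (subplane_refl _ _) _ ab).
by apply: subsetP ba; rewrite ij; apply: line_sub_subplane; rewrite setU11.
Qed.

End Glue.

Lemma good_planes_step S j :
  j \in S -> k < #|S :\ j| -> good_planes (S :\ j) -> good_planes S.
Proof.
move=> jS ltk goodS' x.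
have [B0 sB0 card_B0] := exists_subset_card (ltnW ltk).
have [s0 s0B0] : exists s0, s0 \in B0 by apply/card_gt0P; rewrite card_B0 ltnW.
have jB0 : j \notin B0 := notin_subD1 sB0.
have s0j : s0 != j by apply: contraNneq jB0 => <-.
have card_jB0 : #|j |: B0| = k.+1 by rewrite cardsU1 jB0 card_B0.
have [sig sig_layer] := fin_all_exists (fun v => (goodS' (move_coord x j v)).1).
have [sT sT_base] := (good_k1 card_jB0 x).1.
have /fin_all_exists[rep rep_base] :
    forall v, exists q, q \in U :&: subplane (j |: B0) x /\ q j = v.
  move=> v; have [q qU ql] := line_meets s0 (move_coord x j v).
  exists q; rewrite inE qU (line_move_coord_eq s0j ql).
  by rewrite (line_move_coord_sub _ _ ql) // !inE ?eqxx ?s0B0 ?orbT.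
split; first by exists (glued j sig sT rep); apply: glued_colouring rep_base.
apply: (connected_in_glue (B := j |: B0) (s0 := s0) _ (setU11 j B0) _ s0j).
- exact: setU1_subD1.
- by rewrite !inE s0B0 orbT.
- by move=> p; apply: (good_k1 card_jB0 p).2.
- by move=> p; apply: (goodS' p).2.
Qed.

Lemma good_planes_ge S : k < #|S| -> good_planes S.
Proof.
have [m] := ubnP #|S|; elim: m S => // m IHm S; rewrite ltnS => leSm ltkS.
have [eqS|neqS] := eqVneq #|S| k.+1; first exact: good_k1.
have [j jS] : exists j, j \in S by apply/card_gt0P; apply: leq_ltn_trans ltkS.
have cardS' : #|S :\ j| = #|S|.-1 by rewrite (cardsD1 j S) jS.
have ltkS' : k < #|S :\ j| by rewrite cardS'; move/eqP: neqS; lia.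
by apply: (good_planes_step jS ltkS'); apply: IHm ltkS'; rewrite cardS'; lia.
Qed.

End Induction.

End Planes.

Section PlaneSupport.
Variables (R : numDomainType) (d n k : nat) (A : {ffun mindex d n -> R}).
Variables (g : 'I_k -> 'I_d) (p : mindex d n) (S : {set 'I_d}).
Hypothesis g_inj : injective g.
Hypothesis S_codom : S =i codom g.

Definition plane_coords (a : mindex d n) : mindex k n := [ffun i => a (g i)].

Lemma plane_idx_coord b i : plane_idx g p b (g i) = b i.
Proof.
by rewrite ffunE; case: pickP => [i' /eqP/g_inj -> //|/(_ i)]; rewrite eqxx.
Qed.

Lemma plane_idx_out b l : l \notin codom g -> plane_idx g p b l = p l.
Proof. by move=> lg; rewrite ffunE; case: pickP => [i /eqP gi|//]; rewrite -gi codom_f in lg. Qed.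

Lemma plane_idx_subplane b : plane_idx g p b \in subplane S p.
Proof. by apply/subplaneP=> l; rewrite S_codom; apply: plane_idx_out. Qed.

Lemma plane_coordsK : cancel (plane_idx g p) plane_coords.
Proof. by move=> b; apply/ffunP=> i; rewrite ffunE plane_idx_coord. Qed.

Lemma plane_idxK a : a \in subplane S p -> plane_idx g p (plane_coords a) = a.
Proof.
move=> /subplaneP ap; apply/ffunP=> l; have [/codomP[i ->]|lg] := boolP (l \in codom g).
  by rewrite plane_idx_coord ffunE.
by rewrite plane_idx_out // ap // S_codom.
Qed.

Lemma line_plane_idx i b c :
  (plane_idx g p c \in line (g i) (plane_idx g p b)) = (c \in line i b).
Proof.
apply/lineP/lineP => [lin l li | lin l lgi].
  by have := lin (g l); rewrite !plane_idx_coord (inj_eq g_inj); apply.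
have [/codomP[l' el]|lg] := boolP (l \in codom g).
  by rewrite el !plane_idx_coord lin // -(inj_eq g_inj) -el.
by rewrite !plane_idx_out.
Qed.

Lemma mem_supp_plane b : (b \in supp (plane A g p)) = (plane_idx g p b \in supp A).
Proof. by rewrite !inE ffunE. Qed.

Lemma adj_plane_idx b c :
  adj (supp (plane A g p)) b c = adj (supp A) (plane_idx g p b) (plane_idx g p c).
Proof.
rewrite /adj !mem_supp_plane (inj_eq (can_inj plane_coordsK)).
have [->|bc] := eqVneq b c; first by rewrite /= !andbF.
congr [&& _, _, _ & _]; apply/existsP/existsP => [[i ci]|[l cl]].
  by exists (g i); rewrite line_plane_idx.
have [/codomP[i li]|lg] := boolP (l \in codom g).
  by exists i; rewrite -line_plane_idx -li.
have := line_subplane_eq _ (plane_idx_subplane b) (plane_idx_subplane c) cl.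
by rewrite S_codom => /(_ lg)/(can_inj plane_coordsK) cb; rewrite cb eqxx in bc.
Qed.

Lemma good_subplane_of_plane :
  connected_bitrade (supp (plane A g p)) ->
  (exists s, colouring_on (supp A) (subplane S p) s) /\
  connected_in (supp A) (subplane S p).
Proof.
move=> [[_ [s col]] con]; split.
  exists (s \o plane_coords) => a b /plane_idxK <- /plane_idxK <-.
  by rewrite -adj_plane_idx /= !plane_coordsK; apply: col.
move=> a b /setIP[aA ap] /setIP[bA bp]; rewrite -(plane_idxK ap) -(plane_idxK bp).
apply: (homo_connect (e := adj (supp (plane A g p)))) => [u w uw|].
  by rewrite /adj_in !plane_idx_subplane -adj_plane_idx uw.
by apply: con; rewrite mem_supp_plane plane_idxK.
Qed.

End PlaneSupport.

Lemma good_planes_of_plane_supports (R : numDomainType) d n k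
    (A : {ffun mindex d n -> R}) :
  (forall (f : 'I_k -> 'I_d) (alpha : mindex d n), injective f ->
      connected_bitrade (supp (plane A f alpha))) ->
  forall S : {set 'I_d}, #|S| = k -> good_planes (supp A) S.
Proof.
move=> planes S cardS p.
pose g i := enum_val (cast_ord (esym cardS) i).
have g_inj : injective g by move=> i1 i2 /enum_val_inj/cast_ord_inj.
have S_codom : S =i codom g.
  move=> l; apply/idP/codomP => [lS|[i ->]]; last exact: enum_valP.
  by exists (cast_ord cardS (enum_rank_in lS l)); rewrite /g cast_ordK enum_rankK_in.
exact: good_subplane_of_plane g_inj S_codom (planes g p g_inj).
Qed.

Local Open Scope ring_scope.

Lemma double_permutation_line_card (R : realFieldType) d n (A : {ffun mindex d n -> R}) :
  double_permutation A -> forall i a, #|line i a :&: supp A| = 2%N.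
Proof.
move=> [half sum1] i a; have := sum1 i a.
rewrite (bigID (mem (supp A))) /= [X in _ + X]big1 ?addr0; last first.
  by move=> b /andP[_]; rewrite inE negbK => /eqP.
rewrite (eq_bigr (fun=> 2^-1)); last first.
  by move=> b /andP[_]; rewrite inE; case: (half b) => ->; rewrite ?eqxx.
rewrite (eq_bigl (mem (line i a :&: supp A))) => [|b]; last by rewrite !inE.
rewrite sumr_const -mulr_natr => sum_half.
have : #|line i a :&: supp A|%:R = 2%:R :> R by lra.
by move/eqP; rewrite eqr_nat => /eqP.
Qed.

Theorem mainTheorem4 (R : realFieldType) (d n k : nat)
  (A : {ffun mindex d n -> R}) :
  double_permutation A ->
  (2 <= k)%N -> (k <= d.-1)%N ->
  (forall (f : 'I_k -> 'I_d) (alpha : mindex d n), injective f ->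
      connected_bitrade (supp (plane A f alpha))) ->
  (forall (f : 'I_k.+1 -> 'I_d) (alpha : mindex d n), injective f ->
      connected_bitrade (supp (plane A f alpha))) ->
  connected_bitrade (supp A).
Proof.
move=> dpA k_gt1 le_k_d planes_k planes_k1.
have line2 := double_permutation_line_card dpA.
have line_meets i a : exists2 q, q \in supp A & q \in line i a.
  have /card_gt0P[q /setIP[qa qA]] : (0 < #|line i a :&: supp A|)%N by rewrite line2.
  by exists q.
apply: connected_bitrade_of_good_planes line2 _.
apply: (good_planes_ge line_meets k_gt1 (good_planes_of_plane_supports planes_k)
          (good_planes_of_plane_supports planes_k1)).
by rewrite cardsT card_ord; lia.
Qed.
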